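(* Assume $\mathfrak p<\mathfrak t$ and let $\lambda=\mathfrak p$. Let $\mathcal B\subseteq[\omega]^{\aleph_0}$ exemplify $\mathfrak p$. Then there exist a regular cardinal $\kappa<\lambda$ and a $\subseteq^*$-decreasing sequence $\langle A_i:i<\kappa\rangle$ of members of $[\omega]^{\aleph_0}$ (i.e. $A_j\subseteq^* A_i$ for $i<j<\kappa$) such that (a) $A_i\cap B$ is infinite for every $i<\kappa$ and every $B\in\mathcal B$, and (b) if $A\in[\omega]^{\aleph_0}$ is a pseudo-intersection of $\{A_i:i<\kappa\}$, then $A\cap B$ is finite for some $B\in\mathcal B$.
   Context: $[\omega]^{\aleph_0}$ is the set of infinite subsets of $\omega$; for $A,B\subseteq\omega$, $A\subseteq^* B$ means $A\setminus B$ is finite. A set $A\in[\omega]^{\aleph_0}$ is a pseudo-intersection of a family $\mathcal C\subseteq[\omega]^{\aleph_0}$ if $A\subseteq^* C$ for all $C\in\mathcal C$. A tower is a sequence $\langle X_\alpha:\alpha<\kappa\rangle\subseteq[\omega]^{\aleph_0}$ with $X_\beta\subseteq^*X_\alpha$ for $\alpha<\beta<\kappa$ and such that $\{X_\alpha:\alpha<\kappa\}$ has no pseudo-intersection. $\mathfrak p$ is the least cardinality of a family $\mathcal B\subseteq[\omega]^{\aleph_0}$ all of whose finite subfamilies have infinite intersection but which has no pseudo-intersection; $\mathfrak t$ is the least length of a tower. A family $\mathcal B\subseteq[\omega]^{\aleph_0}$ exemplifies $\mathfrak p$ if it is closed under finite intersections, has no pseudo-intersection, and $|\mathcal B|=\mathfrak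 p$. *)

From mathcomp Require Import all_boot.
From mathcomp Require Import boolp classical_sets functions cardinality.
Set Implicit Arguments. Unset Strict Implicit. Unset Printing Implicit Defensive.
Local Open Scope classical_set_scope.
Local Open Scope card_scope.

Definition infsub (A : set nat) : Prop := infinite_set A.

Definition subseteq_star (A B : set nat) : Prop := finite_set (A `\` B).

Definition pseudo_int (A : set nat) (C : set (set nat)) : Prop :=
  infsub A /\ forall X, C X -> subseteq_star A X.

Definition has_pseudo_int (C : set (set nat)) : Prop :=
  exists A, pseudo_int A C.

(* strong finite intersection property: every finite subfamily has infinite
   intersection (the empty subfamily has intersection omega) *)
Definition sfip (C : set (set nat)) : Prop :=
  forall s : seq (set nat), (forall X, X \in s -> C X) ->
    infinite_set (\bigcap_(X in [set Y | Y \in s]) X).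

Definition strict_wellorder (I : Type) (ltI : I -> I -> Prop) : Prop :=
  well_founded ltI /\
  (forall i j k, ltI i j -> ltI j k -> ltI i k) /\
  (forall i j, ltI i j \/ i = j \/ ltI j i).

Definition starDecreasing (I : Type) (ltI : I -> I -> Prop) (X : I -> set nat)
  : Prop :=
  (forall i, infsub (X i)) /\ (forall i j, ltI i j -> subseteq_star (X j) (X i)).

Definition tower (I : Type) (ltI : I -> I -> Prop) (X : I -> set nat) : Prop :=
  strict_wellorder ltI /\ starDecreasing ltI X /\
  ~ has_pseudo_int (range X).

(* B exemplifies p: B ⊆ [omega]^{aleph_0}, closed under finite intersections,
   has no pseudo-intersection, and |B| = p, i.e. |B| is at most the size of
   every family with the SFIP but no pseudo-intersection. *)
Definition exemplifies_p (B : set (set nat)) : Prop :=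
  (forall X, B X -> infsub X) /\
  (forall X Y, B X -> B Y -> B (X `&` Y)) /\
  ~ has_pseudo_int B /\
  (forall C : set (set nat), (forall X, C X -> infsub X) -> sfip C ->
     ~ has_pseudo_int C -> B #<= C).

(* p < t, phrased with a family B of size p: every tower (of any ordinal
   length) has length of cardinality strictly greater than |B|. *)
Definition p_lt_t_wrt (B : set (set nat)) : Prop :=
  forall (I : Type) (ltI : I -> I -> Prop) (X : I -> set nat),
    tower ltI X -> ~ ([set: I] #<= B).

(* (K, ltK) is (a well-order of order type) an infinite regular cardinal:
   initial ordinal (every proper initial segment has smaller cardinality),
   and every cofinal subset has full cardinality. *)
Definition regular_cardinal (K : Type) (ltK : K -> K -> Prop) : Prop :=
  strict_wellorder ltK /\
  infinite_set [set: K] /\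
  (forall i : K, ~ ([set: K] #<= [set j | ltK j i])) /\
  (forall S : set K, (forall i, exists2 j, S j & ~ ltK j i) ->
     [set: K] #<= S).

From mathcomp Require Import all_boot.
From mathcomp Require Import boolp classical_sets functions cardinality wochoice.
From Stdlib Require Import Wellfounded.
Local Open Scope classical_set_scope.
Local Open Scope card_scope.

Set Implicit Arguments. Unset Strict Implicit. Unset Printing Implicit Defensive.

(* Enumerate B as (b w) along an initial ordinal W of cardinality |B| = p, and
   choose by well-founded recursion almost decreasing sets A w included in b w,
   each meeting every member of B in an infinite set: A w is such a
   pseudo-intersection of the earlier terms, cut down to b w.  The recursion
   cannot run through W: the A w would then be a tower of length p < t, unless
   they had a pseudo-intersection, which would be one of B since A w is
   included in b w.  So it is stuck at some first stage ws.  Below ws the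
   sequence has no last term (that term would extend it) and none of its
   pseudo-intersections meets all of B infinitely.  Reindexing it along a
   monotone cofinal map from the cofinality of ws, a regular cardinal of size
   at most |ws| < p, gives the theorem. *)

Lemma subseteq_star_trans (X Y Z : set nat) :
  subseteq_star X Y -> subseteq_star Y Z -> subseteq_star X Z.
Proof.
move=> XY YZ; apply: (@sub_finite_set _ _ ((X `\` Y) `|` (Y `\` Z))).
  by move=> x [Xx nZx]; have [Yx|nYx] := pselect (Y x); [right|left].
by rewrite finite_setU.
Qed.

Lemma subset_subseteq_star (X Y : set nat) : X `<=` Y -> subseteq_star X Y.
Proof. by rewrite /subseteq_star -setD_eq0 => ->. Qed.

Lemma card_le_inj T U (A : set T) (B : set U) (f : T -> U) :
  f @` A `<=` B -> {in A &, injective f} -> A #<= B.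
Proof.
by move=> fAB finj; rewrite -(card_le_eql (inj_card_eq finj)) subset_card_le.
Qed.

Lemma card_le_surj T U (A : set T) (B : set U) :
  A !=set0 -> A #<= B -> exists f : U -> T, A = f @` B.
Proof.
move=> [a Aa] /pfcard_geP[A0|/surjfunPex//].
by move: Aa; rewrite A0.
Qed.

Lemma exists_wf_minimal T (R : T -> T -> Prop) (P : T -> Prop) :
  well_founded R -> (exists x, P x) ->
  exists x, P x /\ forall y, R y x -> ~ P y.
Proof.
move=> wf [x Px]; apply: contrapT => nmin; move: Px.
elim/(well_founded_ind wf): x => x IH Px.
by apply: nmin; exists x; split=> // y Ryx; apply: IH.
Qed.

Lemma exists_wf_fixpoint (T A : Type) (R : T -> T -> Prop) (a : T -> A)
    (F : T -> (T -> A) -> A) : well_founded R ->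
  (forall x f g, (forall y, R y x -> f y = g y) -> F x f = F x g) ->
  exists c : T -> A, forall x, c x = F x c.
Proof.
move=> wf Fext.
pose G x (rec : forall y, R y x -> A) :=
  F x (fun y => if pselect (R y x) is left Ryx then rec y Ryx else a y).
have Gext x f g : (forall y Ryx, f y Ryx = g y Ryx) -> G x f = G x g.
  by move=> fg; apply: Fext => y Ryx; case: pselect => // ?; rewrite fg.
exists (Fix wf (fun _ => A) G) => x; rewrite (Fix_eq wf (fun _ => A) G Gext).
by apply: Fext => y Ryx; case: pselect.
Qed.

(* [None] stands for the whole order, so that it competes with its proper
   initial segments in minimality arguments. *)
Definition below (I : Type) (lt : I -> I -> Prop) (u : option I) : set I :=
  fun x => if u is Some v then lt x v else True.

Section StrictWellOrder.
Variables (I : Type) (lt : I -> I -> Prop).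
Hypothesis swo : strict_wellorder lt.

Lemma swo_wf : well_founded lt. Proof. by case: swo. Qed.

Lemma swo_trans x y z : lt x y -> lt y z -> lt x z.
Proof. by case: swo => _ [+ _]; apply. Qed.

Lemma swo_total x y : lt x y \/ x = y \/ lt y x.
Proof. by case: swo => _ [_]; apply. Qed.

Lemma swo_irr x : ~ lt x x.
Proof. by elim: (swo_wf x) => y _ IH hy; apply: (IH y hy hy). Qed.

Lemma swo_asym x y : lt x y -> ~ lt y x.
Proof. by move=> xy yx; apply: (@swo_irr x); apply: swo_trans xy yx. Qed.

Lemma swo_nltP x y : ~ lt y x -> lt x y \/ x = y.
Proof. by have [|[|]] := swo_total x y; auto. Qed.

Lemma swo_le_lt_trans x y z : ~ lt y x -> lt y z -> lt x z.
Proof. by move=> /swo_nltP[xy|->] // yz; apply: swo_trans xy yz. Qed.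

Lemma swo_lt_le_trans x y z : lt x y -> ~ lt z y -> lt x z.
Proof. by move=> xy /swo_nltP[yz|<-] //; apply: swo_trans xy yz. Qed.

Lemma swo_le_trans x y z : ~ lt y x -> ~ lt z y -> ~ lt z x.
Proof. by move=> yx zy zx; apply: zy; apply: swo_lt_le_trans zx yx. Qed.

Lemma below_lt u x y : below lt u y -> lt x y -> below lt u x.
Proof. by case: u => //= v yv xy; apply: swo_trans xy yv. Qed.

Definition least (Q : I -> Prop) (d : I) : I :=
  if pselect (exists x, Q x) is left H then
    proj1_sig (cid (exists_wf_minimal swo_wf H)) else d.

Lemma least_spec Q d : (exists x, Q x) ->
  Q (least Q d) /\ forall y, lt y (least Q d) -> ~ Q y.
Proof. by rewrite /least; case: pselect => // H _; case: cid. Qed.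

Lemma least_min Q d x : Q x -> ~ lt x (least Q d).
Proof. by move=> Qx xl; apply: (least_spec d (ex_intro _ x Qx)).2 x xl Qx. Qed.

Lemma exists_minimal_segment (P : option I -> Prop) : P None ->
  exists u, P u /\ forall x, below lt u x -> ~ P (Some x).
Proof.
move=> PN; have [[x Px]|nP] := pselect (exists x, P (Some x)).
  have [m [Pm mmin]] :=
    @exists_wf_minimal _ _ (fun x => P (Some x)) swo_wf (ex_intro _ x Px).
  by exists (Some m).
by exists None; split=> // x _ Px; apply: nP; exists x.
Qed.

Lemma subset_collapse (S : set I) : exists c : I -> I,
  (forall s t, S s -> S t -> lt t s -> lt (c t) (c s)) /\
  (forall s x, S s -> lt x (c s) -> exists2 t, S t & c t = x).
Proof.
pose above (f : I -> I) s x := forall t, S t -> lt t s -> lt (f t) x.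
have Fext s f g : (forall y, lt y s -> f y = g y) ->
    least (above f s) s = least (above g s) s.
  move=> fg; congr least; apply: funext => x; apply: propext.
  by split=> fx t St ts; [rewrite -fg | rewrite fg] => //; apply: fx.
have [c cE] := exists_wf_fixpoint id swo_wf Fext.
have c_le s : S s -> ~ lt s (c s).
  elim: (swo_wf s) => {}s _ IH Ss; rewrite cE; apply: least_min => t St ts.
  exact: swo_le_lt_trans (IH t ts St) ts.
have c_spec s : S s -> above c s (c s) /\ forall y, lt y (c s) -> ~ above c s y.
  move=> Ss; rewrite [c s]cE; apply: least_spec; exists s => t St ts.
  exact: swo_le_lt_trans (c_le t St) ts.
exists c; split=> [s t Ss St ts|]; first exact: (c_spec s Ss).1.
move=> s; elim: (swo_wf s) => {}s _ IH x Ss xs.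
apply: contrapT => nx; apply: ((c_spec s Ss).2 x xs) => t St ts.
have [|[|]] := swo_total (c t) x => // [ctx|xct].
  by case: nx; exists t.
by case: nx; apply: IH xct.
Qed.

Lemma segment_card_le_or_bounded (u : option I) (S : set I) :
  below lt u #<= S \/ exists2 x, below lt u x & S #<= below lt (Some x).
Proof.
have [c [c_mono c_down]] := subset_collapse S.
have [onto|[x xu xS]] : (forall x, below lt u x -> exists2 t, S t & c t = x) \/
    exists2 x, below lt u x & ~ exists2 t, S t & c t = x.
- apply: contrapT => /not_orP[onto /forall2NP nonto]; apply: onto => x xu.
  by have [//|] := nonto x; apply: contrapT.
- left; apply: card_le_trans (card_image_le c S).
  by apply: subset_card_le => x /onto[t St <-]; exists t.
right; exists x => //; apply: (@card_le_inj _ _ _ _ c).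
  move=> _ [s Ss <-] /=; have [//|[csx|xcs]] := swo_total (c s) x.
    by case: xS; exists s.
  by have [t St ctx] := c_down s x Ss xcs; case: xS; exists t.
move=> s t /set_mem Ss /set_mem St cst.
have [st|[//|ts]] := swo_total s t; case: (@swo_irr (c s)).
  by rewrite {2}cst; apply: c_mono.
by rewrite {1}cst; apply: c_mono.
Qed.

End StrictWellOrder.

Arguments least_spec [I lt] swo Q d.
Arguments least_min [I lt] swo Q d [x].

Lemma strict_wellorder_sub (T : Type) (lt : T -> T -> Prop) (P : set T) :
  strict_wellorder lt -> strict_wellorder (fun a b : P => lt (val a) (val b)).
Proof.
move=> swo; split; first exact: wf_inverse_image (swo_wf swo).
split=> [i j k|i j]; first exact: swo_trans.
have [|[/val_inj|]] := swo_total swo (val i) (val j); auto.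
Qed.

Lemma strict_wellorder_of_well_order (T : eqType) (R : rel T) : well_order R ->
  strict_wellorder (fun x y => R x y /\ x <> y).
Proof.
move=> wo; have chainR : wo_chain R predT by apply: withinW.
have total : total R by move=> x y; apply: wo_chainW chainR _ _ _ _.
have antisym : antisymmetric R.
  by move=> x y; apply: (wo_chain_antisymmetric chainR).
have trans : transitive R.
  move=> y x z xy yz.
  have : exists! m, minimum_of R (pred3 x y z) m.
    by apply: wo; exists x; rewrite inE /= eqxx.
  move=> [m [[Pm minm] _]]; case/or3P: Pm => /eqP mE; subst m.
  - by apply: (minm z); rewrite !inE /= eqxx !orbT.
  - by rewrite (@antisym x y) ?xy //; apply: (minm x); rewrite !inE /= eqxx.
  - rewrite -(@antisym y z) ?yz //.
    by apply: (minm y); rewrite !inE /= eqxx !orbT.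
split; last split.
- move=> x; apply: contrapT => nacc.
  pose P := [pred y | ~~ `[< Acc (fun x y => R x y /\ x <> y) y >]].
  have [m [[/negP macc minm] _]] : exists! m, minimum_of R P m.
    by apply: wo; exists x; apply/negP => /asboolP.
  apply: macc; apply/asboolP; constructor => y [ym nym].
  apply: contrapT => nacc'; apply: nym; apply/antisym/andP; split=> //.
  by apply: (minm y); apply/negP => /asboolP.
- move=> x y z [xy nxy] [yz nyz]; split; first exact: trans xy yz.
  by move=> exz; subst z; apply: nxy; apply/antisym/andP.
- move=> x y; have [->|nxy] := pselect (x = y); first by right; left.
  by have /orP[|] := total x y; [left|right; right]; split=> // /esym.
Qed.

Lemma exists_initial_enumeration (T : eqType) (B : set T) : B !=set0 ->
  exists (W : Type) (ltW : W -> W -> Prop) (b : W -> T),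
  [/\ strict_wellorder ltW, B = range b, [set: W] #<= B &
      forall w, ~ (B #<= [set v | ltW v w])].
Proof.
move=> B0.
have [R /strict_wellorder_of_well_order swo] := well_ordering_principle T.
set lt := fun x y => _ in swo.
have BT : B #<= B `&` below lt None by apply: subset_card_le => x Bx; split.
have [u [Bu umin]] :=
  @exists_minimal_segment _ _ swo (fun u => B #<= B `&` below lt u) BT.
set C := B `&` below lt u.
have BC : B #<= [set: C] by rewrite (card_le_eqr (card_setT C)).
have [b Bb] := card_le_surj B0 BC.
exists C, (fun a c => lt (val a) (val c)), b; split.
- exact: strict_wellorder_sub.
- exact: Bb.
- by rewrite (card_le_eql (card_setT C)); apply: subset_card_le => x [].
move=> w Bw; have /set_mem[_ wu] := valP w; apply: (umin _ wu).
apply: card_le_trans Bw _; apply: (@card_le_inj _ _ _ _ val).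
  by move=> _ [v vw <-]; have /set_mem[] := valP v.
by move=> ? ? _ _; apply: val_inj.
Qed.

Section Cofinality.
Variables (I : Type) (lt : I -> I -> Prop).
Hypothesis swo : strict_wellorder lt.

Definition cofinal (S : set I) := forall v, exists2 s, S s & ~ lt s v.

Lemma cofinal_infinite (i0 : I) (S : set I) :
  (forall x, exists y, lt x y) -> cofinal S -> infinite_set S.
Proof.
move=> nomax Scof.
have next x : exists y, S y /\ lt x y.
  have [y xy] := nomax x; have [s Ss sy] := Scof y.
  by exists s; split=> //; exact: (swo_lt_le_trans swo xy sy).
have [f fP] := choice next.
pose g n := iter n.+1 f i0.
have g_lt n m : (n < m)%N -> lt (g n) (g m).
  elim: m => // m IH; rewrite ltnS leq_eqVlt => /orP[/eqP->|/IH nm].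
    exact: (fP _).2.
  exact: swo_trans nm (fP _).2.
apply/infiniteP; apply: (@card_le_inj _ _ _ _ g).
  by move=> _ [n _ <-]; apply: (fP _).1.
move=> n m _ _ gnm; have [/g_lt|/g_lt|//] := ltngtP n m.
  by rewrite gnm => /(swo_irr swo).
by rewrite gnm => /(swo_irr swo).
Qed.

Section MinimalCofinalSegment.
Variables (u : option I) (h : I -> I).
Hypothesis h_cofinal : cofinal (h @` below lt u).
Hypothesis u_min :
  forall g x, below lt u x -> ~ cofinal (g @` below lt (Some x)).

(* The records of [h] are the indices where [h] exceeds all its earlier values;
   [h] is strictly increasing on them and still maps them cofinally. *)
Definition record d := below lt u d /\ forall d', lt d' d -> lt (h d') (h d).

Lemma records_cofinal : cofinal (h @` record).
Proof.
move=> v; have [_ [d0 d0u <-] hd0v] := h_cofinal v.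
pose P d := below lt u d /\ ~ lt (h d) v.
have [d [[du hdv] dmin]] :=
  @exists_wf_minimal _ _ P (swo_wf swo) (ex_intro _ d0 (conj d0u hd0v)).
exists (h d) => //; exists d => //; split=> // d' d'd.
have hd'v : lt (h d') v.
  apply: contrapT => hd'v.
  exact: (dmin d' d'd (conj (below_lt swo du d'd) hd'v)).
exact: (swo_lt_le_trans swo hd'v hdv).
Qed.

Lemma records_unbounded x : below lt u x -> exists2 r, record r & ~ lt r x.
Proof.
move=> xu; apply: contrapT => nr; apply: (@u_min h x xu) => v.
have [_ [r rr <-] hrv] := records_cofinal v.
exists (h r) => //; exists r => //=.
by apply: contrapT => nrx; apply: nr; exists r.
Qed.

Definition record_above k r := record r /\ ~ lt r k.

Definition next_record k := least swo (record_above k) k.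

Lemma next_recordP k : below lt u k -> record_above k (next_record k).
Proof.
move=> ku; have [r rr rk] := records_unbounded ku.
exact: (least_spec swo (record_above k) k (ex_intro _ r (conj rr rk))).1.
Qed.

Lemma next_record_id r : record r -> next_record r = r.
Proof.
move=> rr; have [_ nr] := next_recordP rr.1.
have nrr : ~ lt r (next_record r).
  exact: (least_min swo (record_above r) r (conj rr (@swo_irr _ _ swo r))).
by have [/nr|] := swo_nltP swo nrr.
Qed.

Lemma next_record_le a b : below lt u b -> ~ lt b a ->
  ~ lt (h (next_record b)) (h (next_record a)).
Proof.
move=> bu ba; have [[nbu nb_incr] nbb] := next_recordP bu.
have nb_above : record_above a (next_record b).
  by split; [split | exact: (swo_le_trans swo ba nbb)].
have nba : ~ lt (next_record b) (next_record a).
  exact: (least_min swo (record_above a) a nb_above).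
have [ab|->] := swo_nltP swo nba.
  exact: (swo_asym swo (nb_incr _ ab)).
exact: swo_irr.
Qed.

Lemma next_records_cofinal : cofinal ((h \o next_record) @` below lt u).
Proof.
move=> v; have [_ [d dr <-] hdv] := records_cofinal v.
by exists (h d) => //; exists d; rewrite /= ?next_record_id //; case: dr.
Qed.

Variable i0 : I.

Lemma segment_nonempty : below lt u !=set0.
Proof. by have [_ [d du _] _] := h_cofinal i0; exists d. Qed.

Lemma segment_infinite :
  (forall x, exists y, lt x y) -> infinite_set (below lt u).
Proof.
move=> nomax fin; apply: (cofinal_infinite i0 nomax h_cofinal).
exact: finite_image.
Qed.

Lemma segment_initial x : below lt u x -> ~ (below lt u #<= below lt (Some x)).
Proof.
move=> xu /(card_le_surj segment_nonempty)[g ug].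
by apply: (@u_min (h \o g) x xu); rewrite -image_comp -ug.
Qed.

Lemma segment_regular (S : set I) : S `<=` below lt u ->
  (forall i, below lt u i -> exists2 j, S j & ~ lt j i) -> below lt u #<= S.
Proof.
move=> Su Scof; have [//|[x xu Sx]] := segment_card_le_or_bounded swo u S.
have S0 : S !=set0.
  by have [d du] := segment_nonempty; have [j Sj _] := Scof d du; exists j.
have [g Sg] := card_le_surj S0 Sx; exfalso.
apply: (@u_min (h \o next_record \o g) x xu); rewrite -image_comp -Sg => v.
have [_ [k ku <-] hkv] := next_records_cofinal v; have [j Sj jk] := Scof k ku.
exists (h (next_record j)); first by exists j.
exact: (swo_le_trans swo hkv (next_record_le (Su j Sj) jk)).
Qed.

Lemma regular_cardinal_segment : (forall x, exists y, lt x y) ->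
  regular_cardinal (fun a b : below lt u => lt (val a) (val b)).
Proof.
move=> nomax; have cardK : [set: below lt u] #= below lt u := card_setT _.
split; first exact: strict_wellorder_sub.
split; [|split].
- apply/infiniteP; rewrite (card_le_eqr cardK); apply/infiniteP.
  exact: segment_infinite nomax.
- move=> i; rewrite (card_le_eql cardK) => uK.
  apply: (segment_initial (set_mem (valP i))).
  apply: card_le_trans uK _; apply: (@card_le_inj _ _ _ _ val).
    by move=> _ [k ki <-].
  by move=> ? ? _ _; apply: val_inj.
- move=> S Scof; rewrite (card_le_eql cardK).
  apply: card_le_trans (card_image_le val S); apply: segment_regular.
    by move=> _ [k _ <-]; apply: set_mem (valP k).
  move=> i iu; have [j Sj ji] := Scof (exist _ i (mem_set iu)).
  by exists (val j) => //; exists j.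
Qed.

End MinimalCofinalSegment.

(* The regular cardinal is the cofinality of [I]: the least initial segment
   admitting a cofinal map into [I]. *)
Theorem exists_regular_cofinal (i0 : I) : (forall x, exists y, lt x y) ->
  exists (K : Type) (ltK : K -> K -> Prop) (phi : K -> I),
  [/\ regular_cardinal ltK, [set: K] #<= [set: I],
      forall i j, ltK i j -> ~ lt (phi j) (phi i) & cofinal (range phi)].
Proof.
move=> nomax.
have idT : cofinal (id @` below lt None).
  by move=> v; exists v; [exists v | apply: swo_irr].
have [u [[h h_cof] u_min]] := @exists_minimal_segment _ _ swo
  (fun u => exists h : I -> I, cofinal (h @` below lt u)) (ex_intro _ id idT).
have {}u_min g x : below lt u x -> ~ cofinal (g @` below lt (Some x)).
  by move=> xu gx; apply: (u_min x xu); exists g.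
exists (below lt u), (fun a b => lt (val a) (val b)).
exists (h \o next_record u h \o val).
split.
- exact: regular_cardinal_segment h_cof u_min i0 nomax.
- by rewrite (card_le_eql (card_setT _)); apply: card_leT.
- move=> i j ij.
  exact: (next_record_le h_cof u_min (set_mem (valP j)) (swo_asym swo ij)).
move=> v; have [_ [k ku <-] hkv] := next_records_cofinal h_cof u_min v.
by exists (h (next_record u h k)) => //; exists (exist _ k (mem_set ku)).
Qed.

End Cofinality.

Lemma starDecreasing_le (I : Type) (lt : I -> I -> Prop) (A : I -> set nat)
    i j :
  strict_wellorder lt -> starDecreasing lt A -> ~ lt j i ->
  subseteq_star (A j) (A i).
Proof.
move=> swo [_ Adec] /(swo_nltP swo)[ij|->]; first exact: Adec.
exact: subset_subseteq_star.
Qed.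

Section CofinalSubsequence.
Variables (I K : Type) (lt : I -> I -> Prop) (ltK : K -> K -> Prop).
Variables (A : I -> set nat) (phi : K -> I).
Hypotheses (swo : strict_wellorder lt) (Adec : starDecreasing lt A).

Lemma starDecreasing_comp : (forall i j, ltK i j -> ~ lt (phi j) (phi i)) ->
  starDecreasing ltK (A \o phi).
Proof.
move=> phi_mono; split=> [k|i j ij]; first exact: Adec.1.
exact: (starDecreasing_le swo Adec (phi_mono i j ij)).
Qed.

Lemma pseudo_int_cofinal Y : cofinal lt (range phi) ->
  pseudo_int Y (range (A \o phi)) -> pseudo_int Y (range A).
Proof.
move=> phi_cof [Yinf YA]; split=> // _ [i _ <-].
have [_ [k _ <-] ki] := phi_cof i.
apply: subseteq_star_trans (YA (A (phi k)) _) _; first by exists k.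
exact: (starDecreasing_le swo Adec ki).
Qed.

End CofinalSubsequence.

Section Construction.
Variable B : set (set nat).
Hypothesis B_inf : forall X, B X -> infsub X.
Hypothesis B_setI : forall X Y, B X -> B Y -> B (X `&` Y).
Hypothesis B_npi : ~ has_pseudo_int B.
Hypothesis B_p_lt_t : p_lt_t_wrt B.

Definition positive (Y : set nat) := forall X, B X -> infinite_set (Y `&` X).

Lemma B_nonempty : B !=set0.
Proof.
apply: contrapT => nB; apply: B_npi; exists setT; split=> [|X BX].
  by apply/infiniteP; apply: card_lexx.
by case: nB; exists X.
Qed.

Lemma positiveT : positive setT.
Proof. by move=> X BX; rewrite setTI; apply: B_inf. Qed.

Lemma positive_setI Y Z : positive Y -> B Z -> positive (Y `&` Z).
Proof. by move=> pY BZ X BX; rewrite -setIA; apply/pY/B_setI. Qed.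

Lemma positive_infinite Y : positive Y -> infsub Y.
Proof.
move=> pY; have [X BX] := B_nonempty.
by apply: (@sub_infinite_set _ (Y `&` X)); [move=> x [] | exact: pY].
Qed.

Section Recursion.
Variables (W : Type) (ltW : W -> W -> Prop) (b : W -> set nat).
Hypotheses (swoW : strict_wellorder ltW) (Bb : B = range b).

Lemma B_enum w : B (b w).
Proof. by rewrite Bb; exists w. Qed.

Definition extends (f : W -> set nat) w Y :=
  positive Y /\ forall v, ltW v w -> subseteq_star Y (f v).

(* When no extension exists, [xget] returns [set0]. *)
Lemma exists_extension_sequence : exists A : W -> set nat,
  forall w, A w = xget set0 (extends A w) `&` b w.
Proof.
apply: (exists_wf_fixpoint (fun _ => set0) (swo_wf swoW)) => w f g fg.
congr (xget _ _ `&` _); apply: funext => Y; apply: propext.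
by split=> -[pY Yf]; split=> // v vw; [rewrite -fg | rewrite fg] => //;
  apply: Yf.
Qed.

Variable A : W -> set nat.
Hypothesis A_def : forall w, A w = xget set0 (extends A w) `&` b w.

Lemma extends_step w : (exists Y, extends A w Y) ->
  positive (A w) /\ forall v, ltW v w -> subseteq_star (A w) (A v).
Proof.
move=> /(xgetPex set0)[pY Yf]; split.
  by rewrite (A_def w); apply: positive_setI pY (B_enum w).
move=> v vw; rewrite (A_def w); apply: subseteq_star_trans (Yf v vw).
exact: (subset_subseteq_star (@subIsetl _ _ _)).
Qed.

Lemma recursion_stuck : [set: W] #<= B -> exists w, ~ exists Y, extends A w Y.
Proof.
move=> WB; apply: contrapT => nstuck.
have ext w : exists Y, extends A w Y.
  by apply: contrapT => nw; apply: nstuck; exists w.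
have Adec : starDecreasing ltW A.
  split=> [w|v w vw]; first exact: positive_infinite (extends_step (ext w)).1.
  exact: (extends_step (ext w)).2.
have [[Y [Yinf YA]]|Anpi] := pselect (has_pseudo_int (range A)).
  apply: B_npi; exists Y; split=> // X; rewrite Bb => -[w _ <-].
  apply: subseteq_star_trans (YA (A w) _) _; first by exists w.
  by rewrite (A_def w); exact: (subset_subseteq_star (@subIsetr _ _ _)).
exact: (B_p_lt_t (conj swoW (conj Adec Anpi)) WB).
Qed.

Variable ws : W.
Hypothesis ws_stuck : ~ exists Y, extends A ws Y.
Hypothesis below_ws_ok : forall v, ltW v ws -> exists Y, extends A v Y.

Lemma stuck_nonempty : exists v, ltW v ws.
Proof.
apply: contrapT => nv; apply: ws_stuck; exists setT.
by split=> [|v vws]; [exact: positiveT | case: nv; exists v].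
Qed.

(* If [x] were the last stage below [ws], [A x] would extend the sequence. *)
Lemma stuck_limit x : ltW x ws -> exists2 y, ltW y ws & ltW x y.
Proof.
move=> xws; apply: contrapT => nmax; apply: ws_stuck; exists (A x).
have [pAx Ax_dec] := extends_step (below_ws_ok xws).
split=> // v vws; have [vx|[->|xv]] := swo_total swoW v x.
- exact: Ax_dec.
- exact: subset_subseteq_star.
- by case: nmax; exists v.
Qed.

End Recursion.

Lemma exists_stuck_sequence :
  exists (I : Type) (lt : I -> I -> Prop) (A : I -> set nat) (i0 : I),
  strict_wellorder lt /\ (forall x, exists y, lt x y) /\
  [set: I] #<= B /\ ~ (B #<= [set: I]) /\ starDecreasing lt A /\
  (forall i, positive (A i)) /\
  (forall Y, pseudo_int Y (range A) -> ~ positive Y).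
Proof.
have [W [ltW [b [swoW Bb WB Winit]]]] := exists_initial_enumeration B_nonempty.
have [A A_def] := exists_extension_sequence b swoW.
have [w0 stuck0] := recursion_stuck swoW Bb A_def WB.
have [ws [ws_stuck ws_min]] := @exists_wf_minimal _ _
  (fun w => ~ exists Y, extends ltW A w Y) (swo_wf swoW) (ex_intro _ w0 stuck0).
have below_ok v : ltW v ws -> exists Y, extends ltW A v Y.
  by move=> vws; apply: contrapT; apply: ws_min.
set I := [set v | ltW v ws].
have cardI : [set: I] #= I := card_setT I.
have [v0 v0ws] := stuck_nonempty ws_stuck.
have step (i : I) := extends_step Bb A_def (below_ok _ (set_mem (valP i))).
exists I, (fun a c : I => ltW (val a) (val c)), (A \o val).
exists (exist _ v0 (mem_set v0ws)).
split; first exact: strict_wellorder_sub.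
split.
  move=> i; have iws : ltW (val i) ws := set_mem (valP i).
  have [y yws iy] := stuck_limit swoW Bb A_def ws_stuck below_ok iws.
  by exists (exist _ y (mem_set yws)).
split.
  by rewrite (card_le_eql cardI); apply: card_le_trans WB; apply: card_leT.
split; first by rewrite (card_le_eqr cardI); exact: Winit.
split.
  split=> [i|i j ij]; first exact: positive_infinite (step i).1.
  exact: (step j).2.
split=> [i|Y [_ YA] pY]; first exact: (step i).1.
apply: ws_stuck; exists Y; split=> // v vws; apply: YA.
by exists (exist _ v (mem_set vws)).
Qed.

End Construction.

Theorem proposition2p3 (B : set (set nat)) :
  p_lt_t_wrt B -> exemplifies_p B ->
  exists (K : Type) (ltK : K -> K -> Prop) (A : K -> set nat),
    regular_cardinal ltK /\
    ([set: K] #<= B /\ ~ (B #<= [set: K])) /\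
    starDecreasing ltK A /\
    (forall i X, B X -> infinite_set (A i `&` X)) /\
    (forall Y, pseudo_int Y (range A) -> exists2 X, B X & finite_set (Y `&` X)).
Proof.
move=> p_lt_t [B_inf [B_setI [B_npi _]]].
have [I [lt [A [i0 [swo [nomax [IB [BI [Adec [Apos Astuck]]]]]]]]]] :=
  exists_stuck_sequence B_inf B_setI B_npi p_lt_t.
have [K [ltK [phi [Kreg KI phi_mono phi_cof]]]] :=
  exists_regular_cofinal swo i0 nomax.
exists K, ltK, (A \o phi); split; first exact: Kreg.
split.
  split; first exact: card_le_trans KI IB.
  by move=> BK; exact: (BI (card_le_trans BK KI)).
split; first exact: (starDecreasing_comp swo Adec phi_mono).
split; first by move=> i; exact: (Apos (phi i)).
move=> Y /(pseudo_int_cofinal swo Adec phi_cof)/Astuck.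
by move=> /existsNP[X /not_implyP[BX /contrapT Yfin]]; exists X.
Qed.
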